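(* Let $n\ge 2$, $m\ge 1$, $k\in\{1,\dots,n-1\}$, $h\in\mathbb{R}$, $W\in\mathbb{R}^{m\times(n-1)}$, $w\in\mathbb{R}^m$, $b\in\mathbb{R}^m$, and let $\sigma:\mathbb{R}\to\mathbb{R}$ be differentiable, with $\underline{\sigma}(x)=(\sigma(x_1),\dots,\sigma(x_m))^T$ for $x\in\mathbb{R}^m$. For $y=(y_1,\dots,y_n)^T\in\mathbb{R}^n$ and $j\in\{1,\dots,n\}$ let $\hat{y}^j=(y_1,\dots,y_{j-1},y_{j+1},\dots,y_n)^T\in\mathbb{R}^{n-1}$, and let $\hat{W}^k=(W_{1k},\dots,W_{mk})^T\in\mathbb{R}^m$ be the $k$-th column of $W$. Define maps $\mathcal{V}_{k,Up}^h,\mathcal{V}_{k,Low}^h:\mathbb{R}^n\to\mathbb{R}^n$ as follows: $Y=\mathcal{V}_{k,Up}^h(y)$ is given by $$Y_k = y_k + h\,(\hat{W}^k)^T\,\mathrm{diag}(w)\,\underline{\sigma}(W\hat{y}^k+b),\qquad Y_i=y_i\ \ (i\neq k),$$ and $Y=\mathcal{V}_{k,Low}^h(y)$ is given by $$Y_{k+1} = y_{k+1} - h\,(\hat{W}^k)^T\,\mathrm{diag}(w)\,\underline{\sigma}(W\hat{y}^{k+1}+b),\qquad Y_i=y_i\ \ (i\neq k+1).$$ Then each of $\mathcal{V}_{k,Up}^h$ and $\mathcal{V}_{k,Low}^h$ is symplectic with respect to the variable pair $(y_k,y_{k+1})$, i.e. for every $y\in\mathbb{R}^n$ the $2\times 2$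 Jacobian matrix $M=\frac{\partial (Y_k,Y_{k+1})}{\partial (y_k,y_{k+1})}(y)$ satisfies $M^T \begin{pmatrix}0&-1\\1&0\end{pmatrix} M=\begin{pmatrix}0&-1\\1&0\end{pmatrix}$, and each map is phase volume-preserving, i.e. $\det\left(\frac{\partial Y}{\partial y}(y)\right)=1$ for all $y\in\mathbb{R}^n$.
   Context: $\mathrm{diag}(w)$ denotes the $m\times m$ diagonal matrix with the entries of $w$ on its diagonal. These maps are the ''locally-symplectic modules'' (Up and Low modules for the variable pair $(y_k,y_{k+1})$). *)

From HB Require Import structures.
From mathcomp Require Import all_boot all_order all_algebra.
From mathcomp Require Import all_classical all_reals all_analysis.
Set Implicit Arguments. Unset Strict Implicit. Unset Printing Implicit Defensive.
Import Order.TTheory GRing.Theory Num.Theory.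
Local Open Scope ring_scope.

(* Dimension convention: the ambient dimension of the paper is n = N.+1,
   so y : 'cV_(N.+1), W : 'M_(m, N) (N = n - 1 columns).
   The paper's index k in {1,..,n-1} is encoded 0-based as k : 'I_N;
   the paper's coordinate k is then  idx_k k  and k+1 is  idx_k1 k. *)

Definition idx_k (N : nat) (k : 'I_N) : 'I_N.+1 := widen_ord (leqnSn N) k.
Definition idx_k1 (N : nat) (k : 'I_N) : 'I_N.+1 := lift ord0 k.

Definition yhat (R : Type) (N : nat) (y : 'cV[R]_N.+1) (j : 'I_N.+1) : 'cV[R]_N :=
  \col_(i < N) y (lift j i) 0.

Definition vterm (R : realType) (m N : nat) (sigma : R -> R)
  (W : 'M[R]_(m, N)) (w b : 'cV[R]_m) (k : 'I_N) (z : 'cV[R]_N) : R :=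
  ((col k W)^T *m diag_mx w^T *m map_mx sigma (W *m z + b)) 0 0.

Definition V_up (R : realType) (m N : nat) (sigma : R -> R) (h : R)
  (W : 'M[R]_(m, N)) (w b : 'cV[R]_m) (k : 'I_N) (y : 'cV[R]_N.+1) : 'cV[R]_N.+1 :=
  \col_i (if i == idx_k k
          then y (idx_k k) 0 + h * vterm sigma W w b k (yhat y (idx_k k))
          else y i 0).

Definition V_low (R : realType) (m N : nat) (sigma : R -> R) (h : R)
  (W : 'M[R]_(m, N)) (w b : 'cV[R]_m) (k : 'I_N) (y : 'cV[R]_N.+1) : 'cV[R]_N.+1 :=
  \col_i (if i == idx_k1 k
          then y (idx_k1 k) 0 - h * vterm sigma W w b k (yhat y (idx_k1 k))
          else y i 0).

Definition jacobianP (R : realType) (n : nat) (F : 'cV[R]_n -> 'cV[R]_n)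
  (y : 'cV[R]_n) : 'M[R]_n :=
  \matrix_(i, j) derive1 (fun t : R => F (y + t *: delta_mx j 0) i 0) 0.

Definition jacobianP2 (R : realType) (n : nat) (F : 'cV[R]_n -> 'cV[R]_n)
  (p q : 'I_n) (y : 'cV[R]_n) : 'M[R]_2 :=
  let J := jacobianP F y in
  let sel (i : 'I_2) := if (i : nat) == 0%N then p else q in
  \matrix_(i, j) J (sel i) (sel j).

Definition Jsymp (R : realType) : 'M[R]_2 :=
  \matrix_(i, j) (if (i : nat) == 0%N then (if (j : nat) == 1%N then -1 else 0)
                  else (if (j : nat) == 0%N then 1 else 0)).

From HB Require Import structures.
From mathcomp Require Import all_boot all_order all_algebra.
From mathcomp Require Import all_classical all_reals all_analysis.
From mathcomp Require Import ring.
Import Order.TTheory GRing.Theory Num.Theory.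
Local Open Scope ring_scope.

(* Both modules are shears: each replaces one coordinate y_p by y_p + g(y^p),
   where g does not depend on y_p.  Hence every row of the Jacobian other than
   row p is a row of the identity matrix and its (p, p) entry is 1, so
   expanding along column p gives determinant 1, and the 2 x 2 block for
   (y_k, y_k+1) is unit triangular.  For 2 x 2 matrices M^T J M = (det M) J,
   so that block is symplectic. *)

Lemma det_mx22 (R : comPzRingType) (M : 'M[R]_2) :
  \det M = M 0 0 * M 1 1 - M 0 1 * M 1 0.
Proof.
rewrite (expand_det_row _ 0) !big_ord_recl big_ord0 addr0 /cofactor !det_mx11.
have [lift0 lift1] : lift 0 0 = 1 :> 'I_2 /\ lift 1 0 = 0 :> 'I_2.
  by split; apply: val_inj.
by rewrite !mxE /= lift0 lift1 expr0 mul1r expr1 mulN1r mulrN.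
Qed.

Lemma mulmx_tr_Jsymp (R : realType) (M : 'M[R]_2) :
  M^T *m Jsymp R *m M = \det M *: Jsymp R.
Proof.
have lift0 : lift ord0 ord0 = 1 :> 'I_2 by apply: val_inj.
have ord2 (x : 'I_2) : x = 0 \/ x = 1.
  by case: x => [[|[|//]] ?]; [left | right]; apply: val_inj.
rewrite det_mx22; apply/matrixP => i j.
rewrite !mxE !big_ord_recl !big_ord0 !mxE !big_ord_recl !big_ord0 !mxE lift0.
by case: (ord2 i) => ->; case: (ord2 j) => -> /=; ring.
Qed.

Lemma derive1_affine (R : realType) (a d x : R) :
  derive1 (fun t : R => a + t * d) x = d.
Proof.
have -> : (fun t : R => a + t * d) = cst a + d *: id.
  by apply: funext => t /=; rewrite mulrC.
by rewrite derive1E deriveD // derive_cst deriveZ // derive_id add0r scaler1.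
Qed.

Definition shear {R : pzRingType} {n : nat} (p : 'I_n.+1) (g : 'cV[R]_n -> R)
    (y : 'cV[R]_n.+1) : 'cV[R]_n.+1 :=
  \col_i (if i == p then y p 0 + g (yhat y p) else y i 0).

Lemma yhat_add_delta (R : pzRingType) (n : nat) (y : 'cV[R]_n.+1) (p : 'I_n.+1) t :
  yhat (y + t *: delta_mx p 0) p = yhat y p.
Proof.
apply/matrixP => i j; rewrite !mxE eq_sym (negbTE (neq_lift p i)).
by rewrite mulr0 addr0.
Qed.

Section ShearJacobian.
Context {R : realType} {n : nat} {p : 'I_n.+1} {g : 'cV[R]_n -> R}.

Lemma jacobianP_shear_row y i j :
  i != p -> jacobianP (shear p g) y i j = (i == j)%:R.
Proof.
move=> ip; rewrite mxE.
have -> : (fun t : R => shear p g (y + t *: delta_mx j 0) i 0) =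
          (fun t => y i 0 + t * (i == j)%:R).
  by apply: funext => t; rewrite !mxE (negbTE ip) eqxx andbT eq_sym.
exact: derive1_affine.
Qed.

Lemma jacobianP_shear_diag y : jacobianP (shear p g) y p p = 1.
Proof.
rewrite mxE.
have -> : (fun t : R => shear p g (y + t *: delta_mx p 0) p 0) =
          (fun t => (y p 0 + g (yhat y p)) + t * 1).
  by apply: funext => t; rewrite !mxE yhat_add_delta !eqxx addrAC.
exact: derive1_affine.
Qed.

Lemma det_jacobianP_shear y : \det (jacobianP (shear p g) y) = 1.
Proof.
rewrite (expand_det_col _ p) (bigD1 p) //= jacobianP_shear_diag mul1r.
rewrite big1 ?addr0 => [|i ip]; last first.
  by rewrite jacobianP_shear_row // (negbTE ip) mul0r.
rewrite /cofactor addnn -mul2n exprM sqrrN !expr1n mul1r.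
rewrite (_ : row' p (col' p _) = 1%:M) ?det1 //.
apply/matrixP => i j; rewrite [LHS]mxE [LHS]mxE jacobianP_shear_row.
  by rewrite mxE (inj_eq lift_inj).
by rewrite eq_sym neq_lift.
Qed.

Lemma det_jacobianP2_shear q y : q != p ->
  \det (jacobianP2 (shear p g) p q y) = 1 /\ \det (jacobianP2 (shear p g) q p y) = 1.
Proof.
move=> qp; rewrite !det_mx22 !(@mxE _ 2 2) /= jacobianP_shear_diag.
rewrite !(jacobianP_shear_row _ _ _ qp) eqxx (negbTE qp).
by rewrite mulr1 mulr0 mul0r subr0.
Qed.

End ShearJacobian.

Lemma idx_k1_neq_idx_k {N : nat} (k : 'I_N) : idx_k1 k != idx_k k.
Proof. by rewrite -val_eqE /= /bump leq0n add1n gtn_eqF. Qed.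

Lemma V_up_shear (R : realType) (m N : nat) (sigma : R -> R) (h : R)
    (W : 'M[R]_(m, N)) (w b : 'cV[R]_m) (k : 'I_N) :
  V_up sigma h W w b k = shear (idx_k k) (fun z => h * vterm sigma W w b k z).
Proof. by []. Qed.

Lemma V_low_shear (R : realType) (m N : nat) (sigma : R -> R) (h : R)
    (W : 'M[R]_(m, N)) (w b : 'cV[R]_m) (k : 'I_N) :
  V_low sigma h W w b k = shear (idx_k1 k) (fun z => - (h * vterm sigma W w b k z)).
Proof. by []. Qed.

Theorem mainTheorem1 (R : realType) (N m : nat) (hN : (1 <= N)%N) (hm : (1 <= m)%N)
  (k : 'I_N) (h : R) (W : 'M[R]_(m, N)) (w b : 'cV[R]_m) (sigma : R -> R)
  (hsigma : forall x : R, derivable sigma x 1) :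
  let Up := V_up sigma h W w b k in
  let Low := V_low sigma h W w b k in
  (forall y, trmx (jacobianP2 Up (idx_k k) (idx_k1 k) y) *m Jsymp R
               *m jacobianP2 Up (idx_k k) (idx_k1 k) y = Jsymp R) /\
  (forall y, trmx (jacobianP2 Low (idx_k k) (idx_k1 k) y) *m Jsymp R
               *m jacobianP2 Low (idx_k k) (idx_k1 k) y = Jsymp R) /\
  (forall y, \det (jacobianP Up y) = 1) /\
  (forall y, \det (jacobianP Low y) = 1).
Proof.
rewrite /= V_up_shear V_low_shear.
have k1_neq_k := idx_k1_neq_idx_k k.
have k_neq_k1 : idx_k k != idx_k1 k by rewrite eq_sym.
split; [|split; [|split]] => y; rewrite ?mulmx_tr_Jsymp.
- by rewrite (det_jacobianP2_shear _ y k1_neq_k).1 scale1r.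
- by rewrite (det_jacobianP2_shear _ y k_neq_k1).2 scale1r.
- exact: det_jacobianP_shear.
- exact: det_jacobianP_shear.
Qed.
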